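(* Let $X$ be a Polish space and $2\le\xi<\omega_1$. (1) If there is a monotone $\Sigma^0_\xi$ hull operation on $\mathcal{M}$ with respect to $\mathcal{M}$, then there is a monotone $\Pi^0_{\xi+1}$ hull operation on $\mathtt{Baire}$ with respect to $\mathcal{M}$. (2) If there is a monotone $\Pi^0_\xi$ hull operation on $\mathcal{M}$ with respect to $\mathcal{M}$, then there is a monotone $\Pi^0_\xi$ hull operation on $\mathtt{Baire}$ with respect to $\mathcal{M}$.
   Context: $\mathcal{M}$ is the $\sigma$-ideal of meager subsets of $X$, and $\mathtt{Baire}$ is the $\sigma$-algebra of subsets of $X$ with the Baire property. A Borel hull operation on a family $\mathcal{F}$ with respect to $\mathcal{M}$ is a map $\psi$ from $\mathcal{F}$ to the Borel sets with $A\subseteq\psi(A)$ and $\psi(A)\setminus A\in\mathcal{M}$ for every $A\in\mathcal{F}$. It is monotone if $A_1\subseteq A_2$ in $\mathcal{F}$ implies $\psi(A_1)\subseteq\psi(A_2)$. It is a $\mathcal{K}$ hull operation, for a Borel class $\mathcal{K}$ such as $\Sigma^0_\xi$ or $\Pi^0_\xi$, if all its values belong to $\mathcal{K}$. *)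

From Stdlib Require Import Reals.
Open Scope R_scope.
Set Implicit Arguments.

Definition is_metric (X : Type) (d : X -> X -> R) : Prop :=
  (forall x y, 0 <= d x y) /\
  (forall x y, d x y = 0 <-> x = y) /\
  (forall x y, d x y = d y x) /\
  (forall x y z, d x z <= d x y + d y z).

Definition metric_open (X : Type) (d : X -> X -> R) (U : X -> Prop) : Prop :=
  forall x, U x -> exists r, 0 < r /\ forall y, d x y < r -> U y.

Definition metric_complete (X : Type) (d : X -> X -> R) : Prop :=
  forall u : nat -> X,
    (forall eps, 0 < eps -> exists N, forall m n, (N <= m)%nat -> (N <= n)%nat ->
        d (u m) (u n) < eps) ->
    exists l, forall eps, 0 < eps -> exists N, forall n, (N <= n)%nat -> d (u n) l < eps.

(** countable subset: enumerated (possibly with gaps) by nat *)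
Definition countable_set (X : Type) (S : X -> Prop) : Prop :=
  exists g : nat -> option X, forall x, S x -> exists n, g n = Some x.

Definition metric_separable (X : Type) (d : X -> X -> R) : Prop :=
  exists S : X -> Prop, countable_set S /\
    forall x eps, 0 < eps -> exists y, S y /\ d x y < eps.

Definition polish (X : Type) (opn : (X -> Prop) -> Prop) : Prop :=
  exists d : X -> X -> R,
    is_metric d /\ metric_complete d /\ metric_separable d /\
    forall U, opn U <-> metric_open d U.

Section Top.
Variable X : Type.
Variable opn : (X -> Prop) -> Prop.

Definition compl (A : X -> Prop) : X -> Prop := fun x => ~ A x.

Definition closure (A : X -> Prop) : X -> Prop :=
  fun x => forall U, opn U -> U x -> exists y, U y /\ A y.

Definition nowhere_dense (A : X -> Prop) : Prop :=
  forall U, opn U -> (forall x, U x -> closure A x) -> forall x, ~ U x.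

Definition meager (A : X -> Prop) : Prop :=
  exists F : nat -> (X -> Prop),
    (forall n, nowhere_dense (F n)) /\ (forall x, A x -> exists n, F n x).

Definition baire_prop (A : X -> Prop) : Prop :=
  exists U, opn U /\ meager (fun x => (A x /\ ~ U x) \/ (U x /\ ~ A x)).

Inductive borel : (X -> Prop) -> Prop :=
| borel_open : forall U, opn U -> borel U
| borel_compl : forall A, borel A -> borel (compl A)
| borel_union : forall F : nat -> (X -> Prop), (forall n, borel (F n)) ->
    borel (fun x => exists n, F n x)
| borel_ext : forall A B, borel A -> (forall x, A x <-> B x) -> borel B.

End Top.

(** * Countable ordinals as (well-formed) Brouwer ordinals *)

Inductive Ord : Type :=
| OZ : Ord
| OS : Ord -> Ord
| OL : (nat -> Ord) -> Ord.

(** strict structural subterm relation (implies strict ordinal order) *)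
Inductive osub : Ord -> Ord -> Prop :=
| osub_S : forall a, osub a (OS a)
| osub_L : forall (f : nat -> Ord) n, osub (f n) (OL f)
| osub_trans : forall a b c, osub a b -> osub b c -> osub a c.

(** well-formed: limits are taken only of strictly increasing sequences,
    so OL f denotes a genuine limit ordinal (the sup of the f n).
    Every countable ordinal is denoted by some well-formed term. *)
Inductive ord_wf : Ord -> Prop :=
| wf_Z : ord_wf OZ
| wf_S : forall a, ord_wf a -> ord_wf (OS a)
| wf_L : forall f : nat -> Ord, (forall n, ord_wf (f n)) ->
    (forall n, osub (f n) (f (S n))) -> ord_wf (OL f).

(** For a term a denoting the ordinal alpha,
    [Sigma0 opn a] is the class Sigma^0_{1+alpha} and [Pi0 opn a] is
    Pi^0_{1+alpha}.  So Sigma0 opn OZ = open sets, Sigma0 opn (OS OZ) = F_sigma,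
    and Sigma^0_xi for 2 <= xi < omega_1 is Sigma0 opn a with a <> OZ. *)
Section Hier.
Variable X : Type.
Variable opn : (X -> Prop) -> Prop.

Definition cunion (P : (X -> Prop) -> Prop) (A : X -> Prop) : Prop :=
  exists F : nat -> (X -> Prop),
    (forall x, A x <-> exists n, F n x) /\ forall n, P (F n).

(** Sigma^0_{1+a}, given the family [below] of all Pi^0_{1+b}, b < a *)
Definition sigma_step (a : Ord) (below : (X -> Prop) -> Prop) (A : X -> Prop) : Prop :=
  match a with
  | OZ => opn A
  | _ => cunion below A
  end.

(** PiBelow a B <-> B is in Pi^0_{1+b} for some b < a *)
Fixpoint PiBelow (a : Ord) : (X -> Prop) -> Prop :=
  match a with
  | OZ => fun _ => False
  | OS b => fun B => PiBelow b B \/ sigma_step b (PiBelow b) (compl B)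
  | OL f => fun B => exists n, PiBelow (f n) B
  end.

Definition Sigma0 (a : Ord) (A : X -> Prop) : Prop := sigma_step a (PiBelow a) A.
Definition Pi0 (a : Ord) (A : X -> Prop) : Prop := Sigma0 a (compl A).

Definition monotone_hull (F K : (X -> Prop) -> Prop) (psi : (X -> Prop) -> (X -> Prop)) : Prop :=
  (forall A, F A ->
     borel opn (psi A) /\ K (psi A) /\
     (forall x, A x -> psi A x) /\
     meager opn (fun x => psi A x /\ ~ A x)) /\
  (forall A1 A2, F A1 -> F A2 -> (forall x, A1 x -> A2 x) ->
     forall x, psi A1 x -> psi A2 x).

End Hier.

From Stdlib Require Import Reals Lra Lia Classical IndefiniteDescription Cantor.
Open Scope R_scope.
Set Implicit Arguments.

(* Fix a complete separable metric d inducing the topology, a dense sequence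
   g, and let K_n (n coding a pair (i, m)) be the closed ball of radius 1/m
   around g i.  Given a monotone hull operation psi on the meager sets, put,
   for A with the Baire property,
       hull A = intersection over n with K_n /\ A meager of (X \ K_n) \/ psi (K_n /\ A).
   Then hull A contains A, is monotone in A because psi is, and hull A \ A is
   meager: it is covered by A delta U (U open with A delta U meager), the
   boundary of U, and the meager sets psi (K_n /\ A) \ (K_n /\ A); indeed a
   point outside U and its boundary lies in a ball K_n disjoint from U, and
   then K_n /\ A is contained in A \ U, hence meager.
   The complement of hull A is the countable union of the "excess" sets
   K_n \ psi (K_n /\ A).  If psi has Sigma^0_xi values these are Pi^0_xi, so
   hull A is Pi^0_(xi+1).  If psi has Pi^0_xi values each excess set is a
   closed set intersected with a countable union of Pi^0_(<xi) sets, hence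
   itself such a union, so hull A is Pi^0_xi. *)

Definition unpair (n : nat) : nat * nat := Cantor.of_nat n.

Lemma unpair_surj (i k : nat) : exists n, unpair n = (i, k).
Proof. exists (Cantor.to_nat (i, k)). apply Cantor.cancel_of_to. Qed.

Section CountableUnions.
Variables (X : Type) (P : (X -> Prop) -> Prop).

Lemma cunion_ext (A B : X -> Prop) :
  cunion P A -> (forall x, A x <-> B x) -> cunion P B.
Proof.
  intros [F [HF HP]] HAB. exists F. split; auto.
  intro x. rewrite <- HAB. apply HF.
Qed.

Lemma cunion_flatten (A : X -> Prop) (F : nat -> X -> Prop) :
  (forall x, A x <-> exists n, F n x) -> (forall n, cunion P (F n)) -> cunion P A.
Proof.
  intros HA HF.
  destruct (functional_choice (fun n G => (forall x, F n x <-> exists k, G k x) /\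
                                          forall k, P (G k)) HF) as [G HG].
  exists (fun m => G (fst (unpair m)) (snd (unpair m))). split.
  - intro x. rewrite HA. split.
    + intros [n Hn]. destruct (proj1 (proj1 (HG n) x) Hn) as [k Hk].
      destruct (unpair_surj n k) as [m Hm]. exists m. rewrite Hm. exact Hk.
    + intros [m Hm]. exists (fst (unpair m)). apply (proj1 (HG _) x).
      exists (snd (unpair m)). exact Hm.
  - intro m. apply (proj2 (HG _)).
Qed.

Lemma cunion_or (A B : X -> Prop) :
  cunion P A -> cunion P B -> cunion P (fun x => A x \/ B x).
Proof.
  intros HA HB.
  apply (@cunion_flatten _ (fun n => match n with O => A | S _ => B end)).
  - intro x; split.
    + intros [H|H]; [exists O | exists 1%nat]; exact H.
    + intros [[|n] H]; [left|right]; exact H.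
  - intros [|n]; assumption.
Qed.

End CountableUnions.

Section Meager.
Variables (X : Type) (opn : (X -> Prop) -> Prop).

Lemma meager_sub (A B : X -> Prop) :
  meager opn B -> (forall x, A x -> B x) -> meager opn A.
Proof. intros [F [HF HB]] HAB. exists F. split; auto. Qed.

Lemma meager_countable_union (A : X -> Prop) (M : nat -> X -> Prop) :
  (forall n, meager opn (M n)) -> (forall x, A x -> exists n, M n x) -> meager opn A.
Proof.
  intros HM HA.
  destruct (functional_choice (fun n G => (forall k, nowhere_dense opn (G k)) /\
                                          forall x, M n x -> exists k, G k x) HM) as [G HG].
  exists (fun m => G (fst (unpair m)) (snd (unpair m))). split.
  - intro m. apply (proj1 (HG _)).
  - intros x Hx. destruct (HA x Hx) as [n Hn]. destruct (proj2 (HG n) x Hn) as [k Hk].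
    destruct (unpair_surj n k) as [m Hm]. exists m. rewrite Hm. exact Hk.
Qed.

Lemma borel_or (A B : X -> Prop) :
  borel opn A -> borel opn B -> borel opn (fun x => A x \/ B x).
Proof.
  intros HA HB.
  apply borel_ext with (A := fun x => exists n, (match n with O => A | S _ => B end) x).
  - apply borel_union. intros [|n]; assumption.
  - intro x; split.
    + intros [[|n] H]; [left|right]; exact H.
    + intros [H|H]; [exists O | exists 1%nat]; exact H.
Qed.

End Meager.

Section MetricTopology.
Variables (X : Type) (opn : (X -> Prop) -> Prop) (d : X -> X -> R).
Hypothesis Hd : is_metric d.
Hypothesis Hopn : forall U, opn U <-> metric_open d U.

Lemma metric_open_ext (A B : X -> Prop) :
  metric_open d A -> (forall x, A x <-> B x) -> metric_open d B.
Proof.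
  intros H E x Bx. apply E in Bx. destruct (H x Bx) as [r [r0 Hr]].
  exists r; split; auto. intros y Hy. apply E; auto.
Qed.

Lemma metric_open_or (A B : X -> Prop) :
  metric_open d A -> metric_open d B -> metric_open d (fun x => A x \/ B x).
Proof.
  intros HA HB x [Hx|Hx].
  - destruct (HA x Hx) as [r [r0 Hr]]. exists r; split; auto.
  - destruct (HB x Hx) as [r [r0 Hr]]. exists r; split; auto.
Qed.

Lemma metric_open_and (A B : X -> Prop) :
  metric_open d A -> metric_open d B -> metric_open d (fun x => A x /\ B x).
Proof.
  intros HA HB x [Hx1 Hx2].
  destruct (HA x Hx1) as [r1 [r1p H1]]. destruct (HB x Hx2) as [r2 [r2p H2]].
  exists (Rmin r1 r2). split; [apply Rmin_pos; auto|].
  intros y Hy. split.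
  - apply H1. apply Rlt_le_trans with (1 := Hy). apply Rmin_l.
  - apply H2. apply Rlt_le_trans with (1 := Hy). apply Rmin_r.
Qed.

Lemma metric_open_full : metric_open d (fun _ : X => True).
Proof. intros x _. exists 1; split; [lra|auto]. Qed.

Lemma closed_ball_closed (o : option X) (r : R) :
  metric_open d (compl (fun y => exists q, o = Some q /\ d q y <= r)).
Proof.
  destruct Hd as [_ [_ [Hsym Htri]]].
  intros x Hx. destruct o as [q|].
  - assert (Hq : r < d q x).
    { apply Rnot_le_lt. intro H. apply Hx. exists q; auto. }
    exists (d q x - r). split; [lra|].
    intros y Hy [q' [Hq' Hy']]. injection Hq' as <-.
    pose proof (Htri q y x). rewrite (Hsym y x) in H. lra.
  - exists 1. split; [lra|]. intros y _ [q' [Hq' _]]. discriminate.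
Qed.

(* The points whose 1/(m+1)-ball lies in U; for open U these closed sets
   exhaust U, which makes every open set an F_sigma. *)
Definition inner (U : X -> Prop) (m : nat) : X -> Prop :=
  fun x => forall y, d x y < / INR (S m) -> U y.

Lemma inner_closed (U : X -> Prop) (m : nat) : metric_open d (compl (inner U m)).
Proof.
  destruct Hd as [_ [_ [Hsym Htri]]].
  intros x Hx. apply not_all_ex_not in Hx. destruct Hx as [y Hy].
  apply imply_to_and in Hy. destruct Hy as [Hxy Uy].
  exists (/ INR (S m) - d x y). split; [lra|].
  intros z Hz Hin. apply Uy. apply Hin.
  pose proof (Htri z x y). rewrite (Hsym z x) in H. lra.
Qed.

Lemma inner_cover (U : X -> Prop) :
  metric_open d U -> forall x, U x <-> exists m, inner U m x.
Proof.
  destruct Hd as [_ [Hzero _]]. intros HU x. split.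
  - intro Ux. destruct (HU x Ux) as [r [rp Hr]].
    destruct (archimed_cor1 r rp) as [N [HN HN0]].
    exists N. intros y Hy. apply Hr.
    assert (/ INR (S N) < / INR N).
    { apply Rinv_lt_contravar.
      - apply Rmult_lt_0_compat; apply lt_0_INR; lia.
      - apply lt_INR. lia. }
    lra.
  - intros [m Hm]. apply Hm. rewrite (proj2 (Hzero x x) eq_refl).
    apply Rinv_0_lt_compat. apply lt_0_INR. lia.
Qed.

Lemma boundary_nowhere_dense (U : X -> Prop) :
  opn U ->
  nowhere_dense opn (fun x => ~ U x /\ ~ exists r, 0 < r /\ forall y, d x y < r -> ~ U y).
Proof.
  intros HU V HV Hcl x Vx.
  assert (HVU : forall y, V y -> ~ U y).
  { intros y Vy Uy.
    destruct (Hcl y Vy (fun z => V z /\ U z)) as [z [[_ Uz] [nUz _]]]; auto.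
    apply Hopn, metric_open_and; apply Hopn; auto. }
  destruct (Hcl x Vx V HV Vx) as [z [Vz [_ nInt]]].
  apply nInt. destruct (proj1 (Hopn V) HV z Vz) as [r [rp Hr]].
  exists r. split; auto.
Qed.

Lemma osub_nonzero (x y : Ord) : osub x y -> y <> OZ.
Proof. intro H; induction H; discriminate || assumption. Qed.

Lemma sigma_step_nonzero (b : Ord) (Q : (X -> Prop) -> Prop) (A : X -> Prop) :
  b <> OZ -> sigma_step opn b Q A = cunion Q A.
Proof. intros H; destruct b; [contradiction|reflexivity|reflexivity]. Qed.

Lemma closed_PiBelow (a : Ord) :
  ord_wf a -> a <> OZ -> forall G, metric_open d (compl G) -> PiBelow opn a G.
Proof.
  intro Ha. induction Ha as [|a Ha IH|f Hf IH Hinc]; intros Hnz G HG.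
  - contradiction.
  - simpl. destruct (classic (a = OZ)) as [->|Hne].
    + right. apply Hopn. exact HG.
    + left. apply IH; auto.
  - simpl. exists 1%nat. apply IH; auto. exact (osub_nonzero (Hinc 0%nat)).
Qed.

Lemma open_cunion_PiBelow (b : Ord) :
  ord_wf b -> b <> OZ -> forall U, metric_open d U -> cunion (PiBelow opn b) U.
Proof.
  intros Hb Hnz U HU. exists (inner U). split.
  - apply inner_cover. exact HU.
  - intro m. apply closed_PiBelow; auto. apply inner_closed.
Qed.

Lemma closed_inter_PiBelow (a : Ord) :
  ord_wf a -> forall G P, metric_open d (compl G) -> PiBelow opn a P ->
    PiBelow opn a (fun x => G x /\ P x).
Proof.
  intro Ha. induction Ha as [|a Ha IH|f Hf IH Hinc]; intros G P HG HP.
  - contradiction.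
  - simpl in HP |- *. destruct HP as [HP|HP]; [left; auto|right].
    assert (Hcompl : forall x, compl G x \/ compl P x <-> compl (fun x => G x /\ P x) x).
    { intro x. unfold compl. split; [intros [H|H] [H1 H2]; auto|apply not_and_or]. }
    destruct (classic (a = OZ)) as [->|Hne].
    + simpl in HP |- *. apply Hopn in HP. apply Hopn.
      apply metric_open_ext with (2 := Hcompl). apply metric_open_or; auto.
    + rewrite sigma_step_nonzero in HP |- * by exact Hne.
      apply cunion_ext with (2 := Hcompl).
      apply cunion_or; auto. apply open_cunion_PiBelow; auto.
  - simpl in HP |- *. destruct HP as [n Hn]. exists n. apply IH; auto.
Qed.

End MetricTopology.

Section Hull.
Variables (X : Type) (opn : (X -> Prop) -> Prop) (d : X -> X -> R).
Variable g : nat -> option X.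
Variable psi : (X -> Prop) -> X -> Prop.
Hypothesis Hd : is_metric d.
Hypothesis Hopn : forall U, opn U <-> metric_open d U.
Hypothesis Hg : forall x eps, 0 < eps -> exists i q, g i = Some q /\ d x q < eps.

Definition cball (n : nat) : X -> Prop :=
  fun y => exists q, g (fst (unpair n)) = Some q /\ d q y <= / INR (snd (unpair n)).

Definition piece (A : X -> Prop) (n : nat) : X -> Prop := fun y => cball n y /\ A y.

Definition hull (A : X -> Prop) : X -> Prop :=
  fun x => forall n, meager opn (piece A n) -> ~ cball n x \/ psi (piece A n) x.

Definition excess (A : X -> Prop) (n : nat) : X -> Prop :=
  fun x => meager opn (piece A n) /\ cball n x /\ ~ psi (piece A n) x.

Lemma cball_closed (n : nat) : metric_open d (compl (cball n)).
Proof. apply closed_ball_closed; exact Hd. Qed.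

Lemma cball_basis (x : X) (r : R) :
  0 < r -> exists n, cball n x /\ forall z, cball n z -> d x z < r.
Proof.
  destruct Hd as [_ [_ [Hsym Htri]]]. intro rp.
  destruct (archimed_cor1 (r / 2) ltac:(lra)) as [m [Hm Hm0]].
  assert (mp : 0 < / INR m) by (apply Rinv_0_lt_compat, lt_0_INR; exact Hm0).
  destruct (Hg x mp) as [i [q [Hgi Hxq]]].
  destruct (unpair_surj i m) as [n Hn]. exists n. split.
  - exists q. rewrite Hn. simpl. split; auto. rewrite Hsym. lra.
  - intros z [q' [Hq' Hz]]. rewrite Hn in Hq', Hz. simpl in Hq', Hz.
    rewrite Hgi in Hq'. injection Hq' as <-. pose proof (Htri x q z). lra.
Qed.

Lemma hull_compl (A : X -> Prop) (x : X) :
  compl (hull A) x <-> exists n, excess A n x.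
Proof.
  unfold compl, hull, excess. split.
  - intro H. apply not_all_ex_not in H. destruct H as [n Hn]. exists n.
    apply imply_to_and in Hn. destruct Hn as [Hm Hn]. apply not_or_and in Hn.
    destruct Hn as [H1 H2]. repeat split; auto. apply NNPP; exact H1.
  - intros [n [Hm [HK Hp]]] H. destruct (H n Hm) as [H'|H']; auto.
Qed.

Lemma excess_meager (A : X -> Prop) (n : nat) (x : X) :
  meager opn (piece A n) -> excess A n x <-> cball n x /\ ~ psi (piece A n) x.
Proof. unfold excess. tauto. Qed.

Lemma excess_nonmeager (A : X -> Prop) (n : nat) (x : X) :
  ~ meager opn (piece A n) -> ~ excess A n x.
Proof. intros H [Hm _]. contradiction. Qed.

Variable K0 : (X -> Prop) -> Prop.
Hypothesis Hpsi : monotone_hull opn (meager opn) K0 psi.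

Lemma excess_borel (A : X -> Prop) (n : nat) : borel opn (excess A n).
Proof.
  destruct (classic (meager opn (piece A n))) as [Hm|Hm].
  - apply borel_ext with
      (A := compl (fun x => compl (cball n) x \/ psi (piece A n) x)).
    + apply borel_compl, borel_or.
      * apply borel_open, Hopn, cball_closed.
      * apply (proj1 (proj1 Hpsi _ Hm)).
    + intro x. rewrite excess_meager by exact Hm. unfold compl. split.
      * intro H. split; [apply NNPP|]; intro H'; apply H; auto.
      * intros [H1 H2] [H|H]; auto.
  - apply borel_ext with (A := compl (fun _ : X => True)).
    + apply borel_compl, borel_open, Hopn, metric_open_full.
    + intro x. split; [intro H; exfalso; apply H; exact I|].
      intro H. exfalso. exact (excess_nonmeager Hm H).
Qed.

Lemma hull_borel (A : X -> Prop) : borel opn (hull A).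
Proof.
  apply borel_ext with (A := compl (fun x => exists n, excess A n x)).
  - apply borel_compl, borel_union. intro n. apply excess_borel.
  - intro x. split.
    + intro H. apply NNPP. intro H'. apply H, hull_compl, H'.
    + intros H H'. apply hull_compl in H'. auto.
Qed.

Lemma hull_contains (A : X -> Prop) (x : X) : A x -> hull A x.
Proof.
  intros Ax n Hm. destruct (classic (cball n x)) as [HK|HK]; [right|left; exact HK].
  apply (proj1 (proj2 (proj2 (proj1 Hpsi _ Hm)))). split; auto.
Qed.

Lemma hull_gap_meager (A : X -> Prop) :
  baire_prop opn A -> meager opn (fun x => hull A x /\ ~ A x).
Proof.
  intros [U [HU HAU]].
  set (sym := fun x => (A x /\ ~ U x) \/ (U x /\ ~ A x)).
  set (bd := fun x => ~ U x /\ ~ exists r, 0 < r /\ forall y, d x y < r -> ~ U y).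
  set (gap := fun n x => meager opn (piece A n) /\ psi (piece A n) x /\ ~ piece A n x).
  apply (@meager_countable_union X opn _
           (fun k => match k with O => sym | 1%nat => bd | S (S n) => gap n end)).
  - intros [|[|n]].
    + exact HAU.
    + exists (fun _ => bd). split.
      * intros _. apply boundary_nowhere_dense with (d := d); auto.
      * intros x Hx. exists O. exact Hx.
    + destruct (classic (meager opn (piece A n))) as [Hm|Hm].
      * apply meager_sub with (1 := proj2 (proj2 (proj2 (proj1 Hpsi _ Hm)))).
        intros x [_ Hx]. exact Hx.
      * apply meager_sub with (1 := HAU). intros x [Hx _]. contradiction.
  - intros x [Hx nAx].
    destruct (classic (U x)) as [Ux|nUx]; [exists O; right; auto|].
    destruct (classic (exists r, 0 < r /\ forall y, d x y < r -> ~ U y))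
      as [[r [rp Hr]]|nInt]; [|exists 1%nat; split; auto].
    destruct (cball_basis x rp) as [n [Kx HKr]].
    assert (Hm : meager opn (piece A n)).
    { apply meager_sub with (1 := HAU). intros z [Kz Az]. left. split; auto. }
    exists (S (S n)). split; auto.
    destruct (Hx n Hm) as [H|H]; [contradiction|].
    split; auto. intros [_ Ax]. contradiction.
Qed.

Lemma hull_mono (A1 A2 : X -> Prop) :
  (forall x, A1 x -> A2 x) -> forall x, hull A1 x -> hull A2 x.
Proof.
  intros Hsub x Hx n Hm2.
  assert (Hm1 : meager opn (piece A1 n)).
  { apply meager_sub with (1 := Hm2). intros y [Ky Ay]. split; auto. }
  destruct (Hx n Hm1) as [H|H]; [left; exact H|right].
  apply (proj2 Hpsi (piece A1 n)); auto. intros y [Ky Ay]. split; auto.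
Qed.

Lemma hull_monotone_hull (K : (X -> Prop) -> Prop) :
  (forall A, baire_prop opn A -> K (hull A)) ->
  monotone_hull opn (baire_prop opn) K hull.
Proof.
  intro HK. split.
  - intros A HA. repeat split.
    + apply hull_borel.
    + apply HK, HA.
    + apply hull_contains.
    + apply hull_gap_meager, HA.
  - intros A1 A2 _ _. apply hull_mono.
Qed.

End Hull.

Section HullComplexity.
Variables (X : Type) (opn : (X -> Prop) -> Prop) (d : X -> X -> R).
Variable g : nat -> option X.
Variable psi : (X -> Prop) -> X -> Prop.
Hypothesis Hd : is_metric d.
Hypothesis Hopn : forall U, opn U <-> metric_open d U.
Variable a : Ord.
Hypothesis Ha : ord_wf a.
Hypothesis Ha2 : a <> OZ.

(* Sigma^0_xi values of psi give Pi^0_(xi+1) hulls: each excess set is Pi^0_xi. *)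
Lemma hull_Pi_succ :
  (forall M, meager opn M -> Sigma0 opn a (psi M)) ->
  forall A, Pi0 opn (OS a) (hull opn d g psi A).
Proof.
  intros Hpsi A. exists (excess opn d g psi A). split; [apply hull_compl|].
  intro n. simpl. right. rewrite sigma_step_nonzero by exact Ha2.
  destruct (classic (meager opn (piece d g A n))) as [Hm|Hm].
  - apply cunion_ext with
      (A := fun x => compl (cball d g n) x \/ psi (piece d g A n) x).
    + apply cunion_or.
      * apply open_cunion_PiBelow with (d := d); auto. apply cball_closed, Hd.
      * specialize (Hpsi _ Hm). unfold Sigma0 in Hpsi.
        rewrite sigma_step_nonzero in Hpsi by exact Ha2. exact Hpsi.
    + intro x. unfold compl. rewrite excess_meager by exact Hm. split.
      * intros [H|H] [H1 H2]; auto.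
      * intro H. apply not_and_or in H. destruct H as [H|H]; [left|right]; auto.
        apply NNPP; exact H.
  - apply cunion_ext with (A := fun _ : X => True).
    + apply open_cunion_PiBelow with (d := d); auto. apply metric_open_full.
    + intro x. split; [intros _ H; exact (excess_nonmeager Hm H)|auto].
Qed.

(* Pi^0_xi values of psi give Pi^0_xi hulls: each excess set is a countable
   union of Pi^0_(<xi) sets. *)
Lemma hull_Pi :
  (forall M, meager opn M -> Pi0 opn a (psi M)) ->
  forall A, Pi0 opn a (hull opn d g psi A).
Proof.
  intros Hpsi A. unfold Pi0, Sigma0. rewrite sigma_step_nonzero by exact Ha2.
  apply (@cunion_flatten _ _ _ (excess opn d g psi A)); [apply hull_compl|].
  intro n. destruct (classic (meager opn (piece d g A n))) as [Hm|Hm].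
  - specialize (Hpsi _ Hm). unfold Pi0, Sigma0 in Hpsi.
    rewrite sigma_step_nonzero in Hpsi by exact Ha2.
    destruct Hpsi as [F [HF HFP]].
    exists (fun k x => cball d g n x /\ F k x). split.
    + intro x. rewrite excess_meager by exact Hm. rewrite (HF x). split.
      * intros [HK [k Hk]]. exists k. auto.
      * intros [k [HK Hk]]. split; [|exists k]; auto.
    + intro k. apply closed_inter_PiBelow with (d := d); auto. apply cball_closed, Hd.
  - exists (fun _ _ => False). split.
    + intro x. split; [intro H; destruct (excess_nonmeager Hm H)|intros [_ []]].
    + intro k. apply closed_PiBelow with (d := d); auto.
      apply metric_open_ext with (A := fun _ : X => True); [apply metric_open_full|].
      intro x. unfold compl. tauto.
Qed.

End HullComplexity.

Lemma polish_dense_sequence (X : Type) (opn : (X -> Prop) -> Prop) :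
  polish opn ->
  exists (d : X -> X -> R) (g : nat -> option X),
    is_metric d /\ (forall U, opn U <-> metric_open d U) /\
    forall x eps, 0 < eps -> exists i q, g i = Some q /\ d x q < eps.
Proof.
  intros [d [Hd [_ [[S [[g Hgc] Hdense]] Hopn]]]].
  exists d, g. split; [exact Hd|split; [exact Hopn|]].
  intros x eps He. destruct (Hdense x eps He) as [y [Sy Hy]].
  destruct (Hgc y Sy) as [i Hi]. exists i, y. auto.
Qed.

Theorem corollary3p3 (X : Type) (opn : (X -> Prop) -> Prop) (HX : polish opn)
  (a : Ord) (Ha : ord_wf a) (Ha2 : a <> OZ) :
  ((exists psi, monotone_hull opn (meager opn) (Sigma0 opn a) psi) ->
   exists psi, monotone_hull opn (baire_prop opn) (Pi0 opn (OS a)) psi)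
  /\
  ((exists psi, monotone_hull opn (meager opn) (Pi0 opn a) psi) ->
   exists psi, monotone_hull opn (baire_prop opn) (Pi0 opn a) psi).
Proof.
  destruct (polish_dense_sequence HX) as [d [g [Hd [Hopn Hg]]]].
  split; intros [psi Hpsi]; exists (hull opn d g psi);
    apply (hull_monotone_hull g Hd Hopn Hg Hpsi); intros A _.
  - apply hull_Pi_succ; auto. intros M HM. apply (proj1 Hpsi M HM).
  - apply hull_Pi; auto. intros M HM. apply (proj1 Hpsi M HM).
Qed.
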